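(* Let $m\ge 1$ and consider $4m$ bits grouped into $m$ disjoint blocks of four bits each; index the bits of each block by $1,2,3,4$. Fix $\alpha\in\{2,3\}$ and set $A=\{1,\alpha\}$, $B=\{1,2,3,4\}\setminus A$. Let $(u,v)\in\{0,1\}^{4m}\times\{0,1\}^{4m}$ be random, where $u$ is the error vector and $v$ the flag vector, and suppose the distribution of $(u,v)$ is quasi-independent with strength $\{f^{(\rm in)},\delta_f^{(\rm in)},\delta_{\neg f}^{(\rm in)}\}$. For each block, with restrictions $u=(u_1,\dots,u_4)$, $v=(v_1,\dots,v_4)$ to that block, define the syndrome $s=u_1\oplus u_2\oplus u_3\oplus u_4$, the flagged set $F=\{i: v_i=1\}$, and the correction vector $c\in\{0,1\}^4$ by: $c=0$ if $s=0$; $c=e_1$ if $s=1$ and $F=\emptyset$; $c=e_{\min F}$ if $s=1$ and $F\neq\emptyset$ (here $e_i$ is the $i$-th unit vector). The block's output error bit is $U=\bigoplus_{i\in A}(u_i\oplus c_i)$ (the block has a decoding error iff $U=1$). The block's output flag bit $V$ is: $V=s$ if $|F|=0$; $V=0$ if $|F|=1$; and if $|F|\ge 2$, $V=1$ iff $F\cap A\neq\emptyset$ and $F\cap B\neq\emptyset$. Then the distribution of the $m$ pairs $(U,V)$ (one per block, i.e. the blocks viewed as $m$ bits with errors $U$ and flags $V$) is quasi-independent with strength $\{f^{(\rm out)},\delta_f^{(\rm out)},\delta_{\neg f}^{(\rm out)}\}$, where $$f^{(\rm out)}=4\delta_{\neg f}^{(\rm in)}+4\big(f^{(\rm in)}\big)^2,$$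 $$\delta_f^{(\rm out)}=2\delta_{\neg f}^{(\rm in)}+4f^{(\rm in)}\delta_f^{(\rm in)}+4\big(f^{(\rm in)}\big)^2\big(2\delta_{\neg f}^{(\rm in)}+3\delta_f^{(\rm in)}\big),$$ $$\delta_{\neg f}^{(\rm out)}=4\big(\delta_{\neg f}^{(\rm in)}\big)^2+8f^{(\rm in)}\delta_{\neg f}^{(\rm in)}.$$
   Context: Quasi-independent errors: Let $P(u,v)$ be a probability distribution on $\{0,1\}^n\times\{0,1\}^n$ for a set $\mathcal I$ of $n$ bits, where $u_i=1$ means bit $i$ has an error and $v_i=1$ means bit $i$ is flagged. $P$ is quasi-independent with strength $\{f,\delta_f,\delta_{\neg f}\}$ if for every pair of disjoint subsets $\mathcal J,\mathcal K\subseteq\mathcal I$ with $|\mathcal J|=r$, $|\mathcal K|=s$, and every subset $\mathcal L\subseteq\mathcal K$ with $|\mathcal L|=t$, the probability of the event ''every bit in $\mathcal J$ is unflagged and has an error, every bit in $\mathcal K$ is flagged, and every bit in $\mathcal L$ has an error'' is at most $(\delta_{\neg f})^r(\delta_f)^t f^{\,s-t}$. Interpretation: the four bits are the transversal measurement outcomes of a block of the 4-qubit code with stabilizers $\sigma_z^{\otimes4},\sigma_x^{\otimes4}$; $\alpha=3$ corresponds to decoding the logical $\sigma_z^L=\sigma_z\otimes I\otimes\sigma_z\otimes I$ and $\alpha=2$ to decoding $\sigma_x^L=\sigma_x\otimes\sigma_x\otimes I\otimes I$, and an error means the measured bit differs from the ideal one. *)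

From HB Require Import structures.
From mathcomp Require Import all_boot all_order all_algebra.
Set Implicit Arguments. Unset Strict Implicit. Unset Printing Implicit Defensive.
Import Order.TTheory GRing.Theory Num.Theory.
Local Open Scope ring_scope.

Definition is_distr (R : realFieldType) (I : finType)
  (P : {ffun I -> bool} * {ffun I -> bool} -> R) : Prop :=
  (forall x, 0 <= P x) /\ \sum_(x : {ffun I -> bool} * {ffun I -> bool}) P x = 1.

(* Quasi-independence with strength {f, df, dnf}:
   x.1 = error vector u, x.2 = flag vector v. *)
Definition quasi_indep (R : realFieldType) (I : finType)
  (P : {ffun I -> bool} * {ffun I -> bool} -> R) (f df dnf : R) : Prop :=
  forall J K L : {set I}, [disjoint J & K] -> L \subset K ->
    \sum_(x : {ffun I -> bool} * {ffun I -> bool}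
          | [&& [forall i in J, ~~ x.2 i && x.1 i],
                [forall i in K, x.2 i] &
                [forall i in L, x.1 i]]) P x
    <= dnf ^+ #|J| * df ^+ #|L| * f ^+ (#|K| - #|L|)%N.

(* One block of four bits; bit k (1-based) is index k-1 : 'I_4. *)
Definition setA (alpha : nat) : {set 'I_4} :=
  [set i : 'I_4 | (i.+1 == 1)%N || (i.+1 == alpha)%N].
Definition setB (alpha : nat) : {set 'I_4} := ~: setA alpha.

Definition syndrome (u : 'I_4 -> bool) : bool :=
  \big[addb/false]_(i < 4) u i.

Definition flagset (v : 'I_4 -> bool) : {set 'I_4} := [set i | v i].

Definition corr (u v : 'I_4 -> bool) (i : 'I_4) : bool :=
  syndrome u &&
  (if flagset v == set0 then (i == ord0)
   else (i \in flagset v) &&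
        [forall j : 'I_4, (j < i)%N ==> (j \notin flagset v)]).

Definition blockU (alpha : nat) (u v : 'I_4 -> bool) : bool :=
  \big[addb/false]_(i in setA alpha) (u i (+) corr u v i).

Definition blockV (alpha : nat) (u v : 'I_4 -> bool) : bool :=
  if #|flagset v| == 0%N then syndrome u
  else if #|flagset v| == 1%N then false
  else (flagset v :&: setA alpha != set0) && (flagset v :&: setB alpha != set0).

(* bits indexed by (block j, position i in block) *)
Definition out_map (m alpha : nat)
  (x : {ffun 'I_m * 'I_4 -> bool} * {ffun 'I_m * 'I_4 -> bool})
  : {ffun 'I_m -> bool} * {ffun 'I_m -> bool} :=
  ([ffun j => blockU alpha (fun i => x.1 (j, i)) (fun i => x.2 (j, i))],
   [ffun j => blockV alpha (fun i => x.1 (j, i)) (fun i => x.2 (j, i))]).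

Definition out_distr (R : realFieldType) (m alpha : nat)
  (P : {ffun 'I_m * 'I_4 -> bool} * {ffun 'I_m * 'I_4 -> bool} -> R)
  (y : {ffun 'I_m -> bool} * {ffun 'I_m -> bool}) : R :=
  \sum_(x : {ffun 'I_m * 'I_4 -> bool} * {ffun 'I_m * 'I_4 -> bool}
        | @out_map m alpha x == y) P x.

From HB Require Import structures.
From mathcomp Require Import all_boot all_order all_algebra ring.
Set Implicit Arguments. Unset Strict Implicit. Unset Printing Implicit Defensive.
Import Order.TTheory GRing.Theory Num.Theory.
Local Open Scope ring_scope.

(* Constraints on single bits are encoded by codes: 1 = unflagged error,
   2 = flagged, 3 = flagged error, anything else = no constraint, with
   weights dnf, f, df and 1.  Quasi-independence says exactly that every
   coded event has probability at most the product of the weights of its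
   codes (quasi_indep_codeP).  Hence it suffices to bound, for every code
   t on the output blocks, the probability that each block output meets
   the constraint t j.

   For one block and one output code, an explicit finite list of input
   patterns covers the output event (block_cover, checked by evaluation over
   all 2^8 error/flag configurations of the block), and the total weight of
   the list is the claimed output strength (block_weight).  A union bound
   over one pattern per block, combined with quasi-independence of the
   input, bounds the output event by the product over blocks of these
   totals (block_cover_bound), which is the theorem. *)

Notation config I := ({ffun I -> bool} * {ffun I -> bool})%type.

Definition code_ok (c : nat) (err flag : bool) : bool :=
  match c with 1 => ~~ flag && err | 2 => flag | 3 => flag && err | _ => true end.

Definition code_weight (R : pzRingType) (f df dnf : R) (c : nat) : R :=
  match c with 1 => dnf | 2 => f | 3 => df | _ => 1 end.

Definition code_holds (I : finType) (g : I -> nat) (u v : I -> bool) : bool :=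
  [forall i, code_ok (g i) (u i) (v i)].

Definition qi_event (I : finType) (J K L : {set I}) (u v : I -> bool) : bool :=
  [&& [forall i in J, ~~ v i && u i], [forall i in K, v i] & [forall i in L, u i]].

Section CodedEvents.
Variables (I : finType) (R : realFieldType) (f df dnf : R).

Lemma code_holds_sets (g : I -> nat) (u v : I -> bool) :
  code_holds g u v =
  qi_event [set i | g i == 1%N] [set i | (g i == 2%N) || (g i == 3%N)]
           [set i | g i == 3%N] u v.
Proof.
apply/forallP/and3P => [H|[HJ HK HL] i].
  split; apply/forallP => i; apply/implyP; rewrite inE;
  by have := H i; case: (g i) => [|[|[|[|n]]]] //= /andP[].
move: HJ HK HL => /forallP/(_ i) + /forallP/(_ i) + /forallP/(_ i); rewrite !inE.
by case: (g i) => [|[|[|[|n]]]] //= _ -> ->.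
Qed.

Lemma card_set_sum (p : pred I) : #|[set i | p i]| = (\sum_i (p i : nat))%N.
Proof.
rewrite -sum1_card big_mkcond; apply: eq_bigr => i _.
by rewrite inE; case: (p i).
Qed.

Lemma prod_code_weight (g : I -> nat) :
  \prod_i code_weight f df dnf (g i) =
  dnf ^+ #|[set i | g i == 1%N]| * df ^+ #|[set i | g i == 3%N]|
    * f ^+ #|[set i | g i == 2%N]|.
Proof.
have split_weight i : code_weight f df dnf (g i) =
    dnf ^+ (g i == 1%N) * df ^+ (g i == 3%N) * f ^+ (g i == 2%N).
  by case: (g i) => [|[|[|[|n]]]]; rewrite /= ?expr0 ?expr1 ?mulr1 ?mul1r.
by rewrite (eq_bigr _ (fun i _ => split_weight i)) !big_split /= !prodrXr
           !card_set_sum.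
Qed.

Lemma card_code23 (g : I -> nat) :
  (#|[set i | (g i == 2%N) || (g i == 3%N)]| - #|[set i | g i == 3%N]|)%N =
  #|[set i | g i == 2%N]|.
Proof.
rewrite !card_set_sum (eq_bigr (fun i => (g i == 2%N) + (g i == 3%N))%N).
  by rewrite big_split addnK.
by move=> i _; case: (g i) => [|[|[|[|n]]]].
Qed.

Definition code_of (J K L : {set I}) (i : I) : nat :=
  if i \in J then 1 else if i \in L then 3 else if i \in K then 2 else 0.

Lemma code_of_sets (J K L : {set I}) : [disjoint J & K] -> L \subset K ->
  let g := code_of J K L in
  [/\ [set i | g i == 1%N] = J,
      [set i | (g i == 2%N) || (g i == 3%N)] = K & [set i | g i == 3%N] = L].
Proof.
move=> dJK sLK /=.
have JnK i : i \in J -> i \in K = false by move=> iJ; rewrite (disjointFr dJK iJ).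
split; apply/setP => i; rewrite inE /code_of; move: (JnK i) (subsetP sLK i);
  case: (i \in J); case: (i \in L); case: (i \in K) => //=;
  by [move=> /(_ isT) | move=> _ /(_ isT)].
Qed.

Lemma quasi_indep_codeP (P : config I -> R) :
  quasi_indep P f df dnf <->
  forall g : I -> nat,
    \sum_(x : config I | code_holds g x.1 x.2) P x
      <= \prod_i code_weight f df dnf (g i).
Proof.
have eventE (g : I -> nat) : \sum_(x : config I | code_holds g x.1 x.2) P x =
    \sum_(x : config I | qi_event [set i | g i == 1%N]
                           [set i | (g i == 2%N) || (g i == 3%N)]
                           [set i | g i == 3%N] x.1 x.2) P x.
  by apply: eq_bigl => x; rewrite code_holds_sets.
have weightE (g : I -> nat) : \prod_i code_weight f df dnf (g i) =
    dnf ^+ #|[set i | g i == 1%N]| * df ^+ #|[set i | g i == 3%N]|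
      * f ^+ (#|[set i | (g i == 2%N) || (g i == 3%N)]| - #|[set i | g i == 3%N]|).
  by rewrite prod_code_weight card_code23.
split=> [HQ g | Hg J K L dJK sLK].
  rewrite eventE weightE; apply: HQ.
    rewrite -setI_eq0; apply/eqP/setP => i; rewrite !inE.
    by case: (g i) => [|[|[|[|n]]]].
  by apply/subsetP => i; rewrite !inE => ->; rewrite orbT.
have [EJ EK EL] := code_of_sets dJK sLK.
by have := Hg (code_of J K L); rewrite eventE weightE EJ EK EL; apply.
Qed.

End CodedEvents.

Section Covering.
Variables (R : realFieldType) (f df dnf : R).

Lemma union_bound (X S : finType) (P : X -> R) (C : pred X) (F : pred S)
    (H : S -> pred X) :
  (forall x, 0 <= P x) -> (forall x, C x -> exists2 s, F s & H s x) ->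
  \sum_(x | C x) P x <= \sum_(s | F s) \sum_(x | H s x) P x.
Proof.
move=> P_ge0 cover.
rewrite (exchange_big_dep predT) //= [X in _ <= X](bigID C) /=.
rewrite -[X in X <= _]addr0 lerD //; last by do 2!apply: sumr_ge0 => ? _.
apply: ler_sum => x Cx; have [s Fs Hsx] := cover x Cx.
by rewrite (bigD1 s) ?Fs ?Hsx //= lerDl; apply: sumr_ge0.
Qed.

Lemma sum_pushforward (X Y : finType) (h : X -> Y) (C : pred Y) (P : X -> R) :
  \sum_(y | C y) \sum_(x | h x == y) P x = \sum_(x | C (h x)) P x.
Proof.
rewrite [RHS](partition_big h C) //=; apply: eq_bigr => y Cy; apply: eq_bigl => x.
by case: eqP => [->|_]; rewrite ?Cy ?andbF.
Qed.

(* If every configuration of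
   an event meets, in each block [j], one of the patterns [pats j], then the
   event has mass at most the product over blocks of the total pattern
   weights: choose one pattern per block, glue the choices into one code on
   [M * S], and sum the quasi-independence bounds. *)
Lemma block_cover_bound (M S Pat : finType) (pcode : Pat -> S -> nat)
    (P : config (M * S) -> R) (pats : M -> seq Pat) (C : pred (config (M * S))) :
  (forall x, 0 <= P x) -> quasi_indep P f df dnf -> (forall j, uniq (pats j)) ->
  (forall x, C x -> forall j, has (fun p =>
     code_holds (pcode p) (fun s => x.1 (j, s)) (fun s => x.2 (j, s))) (pats j)) ->
  \sum_(x | C x) P x <=
  \prod_j \sum_(p <- pats j) \prod_s code_weight f df dnf (pcode p s).
Proof.
move=> P_ge0 /quasi_indep_codeP HQ uniq_pats cover.
pose glue (sigma : {ffun M -> Pat}) (b : M * S) := pcode (sigma b.1) b.2.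
have glued_cover x : C x -> exists2 sigma, sigma \in family (fun j => mem (pats j))
    & code_holds (glue sigma) x.1 x.2.
  move=> Cx; have /fin_all_exists[sigma sigmaP] : forall j, exists p : Pat,
      (p \in pats j) && code_holds (pcode p) (fun s => x.1 (j, s)) (fun s => x.2 (j, s)).
    by move=> j; have /hasP[p ? ?] := cover x Cx j; exists p; apply/andP.
  exists [ffun j => sigma j].
    by apply/familyP => j; rewrite ffunE; case/andP: (sigmaP j).
  apply/forallP => -[j s]; rewrite /glue ffunE /=.
  by have /andP[_ /forallP] := sigmaP j; apply.
apply: le_trans (union_bound P_ge0 glued_cover) _.
under eq_bigr => j _ do rewrite big_uniq //.
rewrite bigA_distr_big_dep /=; apply: ler_sum => sigma _.
by rewrite pair_big; apply: HQ (glue sigma).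
Qed.

End Covering.

Definition pos0 : 'I_4 := @Ordinal 4 0 erefl.
Definition pos1 : 'I_4 := @Ordinal 4 1 erefl.
Definition pos2 : 'I_4 := @Ordinal 4 2 erefl.
Definition pos3 : 'I_4 := @Ordinal 4 3 erefl.

Lemma ord4P (i : 'I_4) : [\/ i = pos0, i = pos1, i = pos2 | i = pos3].
Proof.
case: i => [[|[|[|[|k]]]] lt_k4] //.
- by apply: Or41; apply: val_inj.
- by apply: Or42; apply: val_inj.
- by apply: Or43; apply: val_inj.
- by apply: Or44; apply: val_inj.
Qed.

(* Unfolding of the finite operations over one block, used to decide the
   block-level cover by evaluation. *)
Lemma big4 (T : Type) (idx : T) (op : T -> T -> T) (F : 'I_4 -> T) :
  \big[op/idx]_(i < 4) F i = op (F pos0) (op (F pos1) (op (F pos2) (op (F pos3) idx))).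
Proof.
rewrite !big_ord_recl big_ord0.
by congr (op (F _) (op (F _) (op (F _) (op (F _) _)))); apply: val_inj.
Qed.

Lemma forall4 (p : pred 'I_4) : [forall i, p i] = [&& p pos0, p pos1, p pos2 & p pos3].
Proof.
apply/forallP/and4P => [H|[H0 H1 H2 H3] i]; first by split; apply: H.
by case: (ord4P i) => ->.
Qed.

Lemma set0_4 (S : {set 'I_4}) :
  (S == set0) = ~~ [|| pos0 \in S, pos1 \in S, pos2 \in S | pos3 \in S].
Proof.
apply/eqP/idP => [-> | H]; first by rewrite !inE.
by apply/setP => i; rewrite inE; apply/negbTE; case: (ord4P i) => ->;
   apply: contra H => ->; rewrite ?orbT.
Qed.

Lemma card4 (S : {set 'I_4}) :
  #|S| = ((pos0 \in S) + (pos1 \in S) + (pos2 \in S) + (pos3 \in S))%N.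
Proof.
rewrite -sum1_card big_mkcond big4 /=.
by case: (pos0 \in S); case: (pos1 \in S); case: (pos2 \in S); case: (pos3 \in S).
Qed.

Definition pattern := ('I_4 * 'I_4 * 'I_4 * 'I_4)%type.

Definition pcode (p : pattern) (i : 'I_4) : nat :=
  nth 0 [:: val p.1.1.1; val p.1.1.2; val p.1.2; val p.2] i.

Definition code_ord (c : nat) : 'I_4 :=
  match c with 0 => pos0 | 1 => pos1 | 2 => pos2 | _ => pos3 end.

(* The pattern with the listed (position, code) pairs, free elsewhere. *)
Definition mkpat (l : seq (nat * nat)) : pattern :=
  let code k := code_ord (nth 0 (unzip2 l) (index k (unzip1 l))) in
  (code 0, code 1, code 2, code 3).

Definition block_patterns (alpha c : nat) : seq pattern :=
  let A := [:: 0; alpha.-1] in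
  let B := [seq i <- iota 0 4 | i \notin A] in
  let others a b := [seq i <- iota 0 4 | i \notin [:: a; b]] in
  match c with
  | 1 => (* unflagged output error: 4 dnf^2 + 8 f dnf *)
    [seq mkpat [:: (a, 1); (b, 1)] | a <- A, b <- B] ++
    [seq mkpat [:: (k, 2); (j, 1)] | k <- A, j <- B] ++
    [seq mkpat [:: (k, 2); (j, 1)] | k <- B, j <- A]
  | 2 => (* output flag: 4 dnf + 4 f^2 *)
    [seq mkpat [:: (i, 1)] | i <- iota 0 4] ++
    [seq mkpat [:: (a, 2); (b, 2)] | a <- A, b <- B]
  | 3 => (* flagged output error: 2 dnf + 4 f df + 8 f^2 dnf + 12 f^2 df *)
    [seq mkpat [:: (b, 1)] | b <- B] ++
    [seq mkpat [:: (minn a b, 2); (maxn a b, 3)] | a <- A, b <- B] ++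
    [seq mkpat [:: (ab.1, 2); (ab.2, 2); (j, 1)]
       | ab <- [seq (a, b) | a <- A, b <- B], j <- others ab.1 ab.2] ++
    [seq mkpat [seq (i, if i == e then 3 else 2) | i <- others k k]
       | k <- iota 0 4, e <- others k k]
  | _ => [:: mkpat [::]]
  end.

(* No pattern is listed twice, so list sums are sums over sets of patterns. *)
Lemma block_patterns_uniq alpha c : (alpha == 2%N) || (alpha == 3%N) ->
  uniq (block_patterns alpha c).
Proof. by case/orP => /eqP ->; case: c => [|[|[|[|c]]]]. Qed.

Lemma syndromeE (u : 'I_4 -> bool) :
  syndrome u = u pos0 (+) (u pos1 (+) (u pos2 (+) (u pos3 (+) false))).
Proof. by rewrite /syndrome big4. Qed.

Lemma block_cover alpha c (u v : 'I_4 -> bool) : (alpha == 2%N) || (alpha == 3%N) ->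
  code_ok c (blockU alpha u v) (blockV alpha u v) ->
  has (fun p => code_holds (pcode p) u v) (block_patterns alpha c).
Proof.
move=> alpha23; apply/implyP; under eq_has => p do rewrite /code_holds forall4.
rewrite /blockV /blockU /corr big_mkcond big4 /= !syndromeE /flagset !card4.
rewrite !set0_4 !forall4 /setB /setA !inE /=.
move: (u pos0) (u pos1) (u pos2) (u pos3) (v pos0) (v pos1) (v pos2) (v pos3).
by case/orP: alpha23 => /eqP ->; case: c => [|[|[|[|c]]]]; do 8! case.
Qed.

Lemma block_weight (R : comNzRingType) (f df dnf : R) alpha c :
  (alpha == 2%N) || (alpha == 3%N) ->
  \sum_(p <- block_patterns alpha c) \prod_i code_weight f df dnf (pcode p i) =
  code_weight (4 * dnf + 4 * f ^+ 2)
              (2 * dnf + 4 * f * df + 4 * f ^+ 2 * (2 * dnf + 3 * df))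
              (4 * dnf ^+ 2 + 8 * f * dnf) c.
Proof.
case/orP => /eqP ->; case: c => [|[|[|[|c]]]];
  rewrite /= !big_cons big_nil !big4 /=; ring.
Qed.

Unset Implicit Arguments.

Theorem mainTheorem1 (R : realFieldType) (m alpha : nat) (f df dnf : R)
  (P : {ffun 'I_m * 'I_4 -> bool} * {ffun 'I_m * 'I_4 -> bool} -> R) :
  (1 <= m)%N -> (alpha = 2%N \/ alpha = 3%N) ->
  is_distr P ->
  quasi_indep P f df dnf ->
  quasi_indep (@out_distr R m alpha P)
    (4 * dnf + 4 * f ^+ 2)
    (2 * dnf + 4 * f * df + 4 * f ^+ 2 * (2 * dnf + 3 * df))
    (4 * dnf ^+ 2 + 8 * f * dnf).
Proof.
move=> _ alpha_eq [P_ge0 _] HQ.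
have alpha23 : (alpha == 2%N) || (alpha == 3%N) by case: alpha_eq => ->.
apply/quasi_indep_codeP => t.
rewrite /out_distr sum_pushforward.
under eq_bigr => j _ do rewrite -(block_weight f df dnf (t j) alpha23).
apply: block_cover_bound => // [j | x out_x j]; first exact: block_patterns_uniq.
apply: block_cover => //.
by move/forallP/(_ j): out_x; rewrite /out_map !ffunE.
Qed.
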